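(* Let $\mathcal Y\subset\mathbb R^d$ be finite with no element a strict convex combination of others, $Y$ the matrix with columns $y\in\mathcal Y$, $\varepsilon>0$, and $\mathbf Z$ a centred random variable on $\mathbb R^d$ whose distribution belongs to an exponential family with positive density (typically standard multivariate normal). Define $F_{\varepsilon,\mathcal C}(\theta)=\mathbb E[\max_{y\in\mathcal Y}(\theta+\varepsilon\mathbf Z)^\top y]$ for $\theta\in\mathbb R^d$ and $F_{\varepsilon,\Delta}(s)=\mathbb E[\max_{y\in\mathcal Y}s(y)+\varepsilon\mathbf Z^\top y]$ for $s\in\mathbb R^{\mathcal Y}$, and let $\Omega_{\varepsilon,\mathcal C}=F^*_{\varepsilon,\mathcal C}$ and $\Omega_{\varepsilon,\Delta}=F^*_{\varepsilon,\Delta}$ be their Fenchel conjugates. Then for every $\mu\in\mathbb R^d$, $$\Omega_{\varepsilon,\mathcal C}(\mu)=\inf\{\Omega_{\varepsilon,\Delta}(q): q\in\mathbb R^{\mathcal Y},\ Yq=\mu\}.$$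
   Context: $\mathbb R^{\mathcal Y}$ denotes vectors indexed by $\mathcal Y$ with components $s(y)$; the infimum over an empty set is $+\infty$. *)

From HB Require Import structures.
From mathcomp Require Import all_boot all_order all_algebra.
From mathcomp Require Import all_classical all_reals all_analysis.
Set Implicit Arguments. Unset Strict Implicit. Unset Printing Implicit Defensive.
Import Order.TTheory GRing.Theory Num.Theory.
Local Open Scope classical_set_scope.
Local Open Scope ring_scope.

Section Defs.
Variable R : realType.

Definition dotp (d : nat) (u v : 'I_d -> R) : R := \sum_(k < d) u k * v k.

Definition vec_of (d : nat) (s : seq R) : 'I_d -> R := fun k => nth 0 s k.

(* Iterated Lebesgue integral on R^n (Tonelli):
   iint n g = \int dx_1 ... \int dx_n g [:: x_1; ...; x_n].
   For nonnegative measurable g this is the Lebesgue integral on R^n. *)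
Fixpoint iint (n : nat) (g : seq R -> \bar R) : \bar R :=
  match n with
  | 0 => g [::]
  | n'.+1 => (\int[@lebesgue_measure R]_x iint n' (fun s => g (x :: s)))%E
  end.

Definition expfam_pos_density (d : nat) (p : ('I_d -> R) -> R) : Prop :=
  (forall z, 0 < p z) /\
  exists (m : nat) (h : ('I_d -> R) -> R) (Tst : ('I_d -> R) -> 'I_m -> R)
         (eta : 'I_m -> R) (A : R),
    (forall z, 0 <= h z) /\
    forall z, p z = h z * expR (dotp eta (Tst z) - A).

(* The random vector Z = (Z_0,...,Z_{d-1}) on (T, P) has density p:
   its law agrees with p(z) dz on all Borel rectangles (a pi-system
   generating the Borel sigma-algebra of R^d). *)
Definition has_density (dT : measure_display) (T : measurableType dT)
  (P : probability T R) (d : nat) (Z : 'I_d -> T -> R)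
  (p : ('I_d -> R) -> R) : Prop :=
  forall B : 'I_d -> set R, (forall k, measurable (B k)) ->
    P (\bigcap_(k in [set: 'I_d]) (Z k @^-1` B k)) =
    iint d (fun s => ((\prod_(k < d) \1_(B k) (vec_of s k)) * p (vec_of s))%:E).

Definition fenchel (J : finType) (f : (J -> R) -> \bar R) (mu : J -> R) : \bar R :=
  ereal_sup [set ((\sum_(j : J) th j * mu j)%:E - f th)%E | th in [set: J -> R]].

Definition F_C (dT : measure_display) (T : measurableType dT)
  (P : probability T R) (d : nat) (Z : 'I_d -> T -> R)
  (I : finType) (y : I -> 'I_d -> R) (eps : R) (theta : 'I_d -> R) : \bar R :=
  (\int[P]_w \big[Order.max/-oo%E]_(i : I)
        (dotp (fun k => theta k + eps * Z k w) (y i))%:E)%E.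

Definition F_D (dT : measure_display) (T : measurableType dT)
  (P : probability T R) (d : nat) (Z : 'I_d -> T -> R)
  (I : finType) (y : I -> 'I_d -> R) (eps : R) (s : I -> R) : \bar R :=
  (\int[P]_w \big[Order.max/-oo%E]_(i : I)
        (s i + eps * dotp (fun k => Z k w) (y i))%:E)%E.

Definition no_convex_comb (d : nat) (I : finType) (y : I -> 'I_d -> R) : Prop :=
  forall i : I, ~ exists q : I -> R,
    [/\ forall j, 0 <= q j, q i = 0, \sum_(j : I) q j = 1 &
        forall k, y i k = \sum_(j : I) q j * y j k].

End Defs.

From HB Require Import structures.
From mathcomp Require Import all_boot all_order all_algebra.
From mathcomp Require Import all_classical all_reals all_analysis.
From mathcomp Require Import measurable_realfun.
From mathcomp Require Import ring lra.
Set Implicit Arguments. Unset Strict Implicit. Unset Printing Implicit Defensive.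
Import Order.TTheory GRing.Theory Num.Theory.
Local Open Scope classical_set_scope.
Local Open Scope ring_scope.

(* Since (theta + eps Z)^T y = theta^T y + eps Z^T y, we have F_C = F_D o Y^T,
   and F_D is a real-valued convex function of s (the expectation of a maximum
   of integrable functions affine in s).  For every real-valued convex F on
   R^Y, the conjugate of F o Y^T at mu is the infimum of F^* over the fibre
   Y q = mu, and the infimum is attained.  The inequality <= is
   <theta, mu> = <Y^T theta, q>.  Conversely, if (F o Y^T)^*(mu) = c, the
   linear form Y^T theta |-> <theta, mu> is dominated by c + F on the range of
   Y^T; extending it one coordinate at a time, as in the proof of the
   Hahn-Banach theorem, gives a form <., q> dominated by c + F everywhere, so
   that Y q = mu and F^*(q) <= c. *)

Lemma difference_quotients_le (R : realType) (A1 A2 F1 F2 c t r : R) :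
  0 < t -> 0 < r ->
  t / (t + r) * A1 + (1 - t / (t + r)) * A2 - c <=
    t / (t + r) * F1 + (1 - t / (t + r)) * F2 ->
  (A1 - c - F1) / r <= (c + F2 - A2) / t.
Proof.
move=> t0 r0; have tr0 : 0 < t + r by rewrite addr_gt0.
set lam := t / (t + r) => mixle.
have lamE : t = lam * (t + r) by rewrite /lam mulfVK ?gt_eqF.
have lamE' : r = (1 - lam) * (t + r) by rewrite mulrBl -lamE mul1r addrAC subrr add0r.
rewrite ler_pdivrMr // mulrAC ler_pdivlMr // {1}lamE {2}lamE'.
nra.
Qed.

Lemma dotp_comb (R : realType) d (a b : R) (u v w : 'I_d -> R) :
  dotp (fun k => a * u k + b * v k) w = a * dotp u w + b * dotp v w.
Proof. by rewrite /dotp !mulr_sumr -big_split /=; apply: eq_bigr => k _; ring. Qed.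

Lemma dotp_shift (R : realType) d (a : R) (u v w : 'I_d -> R) :
  dotp (fun k => u k + a * v k) w = dotp u w + a * dotp v w.
Proof. by rewrite /dotp mulr_sumr -big_split /=; apply: eq_bigr => k _; ring. Qed.

Lemma dotp0 (R : realType) d (v : 'I_d -> R) : dotp (fun=> 0) v = 0.
Proof. by rewrite /dotp big1 // => k _; rewrite mul0r. Qed.

Lemma dotp_delta (R : realType) d (lam : R) (k : 'I_d) (v : 'I_d -> R) :
  dotp (fun m => lam * (m == k)%:R) v = lam * v k.
Proof.
rewrite /dotp (bigD1 k) //= eqxx mulr1 big1 ?addr0 // => m /negbTE ->.
by rewrite mulr0 mul0r.
Qed.

Lemma linear_bounded_eq0 (R : realType) (D C : R) :
  (forall lam : R, lam * D <= C) -> D = 0.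
Proof.
move=> bounded; apply/eqP/negP => /negP D0.
by have := bounded ((C + 1) / D); rewrite divfK //; lra.
Qed.

Section ConvexDomination.
Variables (R : realType) (I : finType) (F : (I -> R) -> R).
Hypothesis F_convex : forall s t (l : R), 0 <= l <= 1 ->
  F (fun i => l * s i + (1 - l) * t i) <= l * F s + (1 - l) * F t.

Lemma dominated_extension_step (X : Type) (l : X -> R) (B : X -> I -> R) (c : R)
    (u : I -> R) (x0 : X) :
  (forall x x' (lam : R), 0 <= lam <= 1 -> exists z,
     l z = lam * l x + (1 - lam) * l x' /\
     B z = (fun i => lam * B x i + (1 - lam) * B x' i)) ->
  (forall x, l x - F (B x) <= c) ->
  exists a, forall x t, l x + t * a - F (fun i => B x i + t * u i) <= c.
Proof.
move=> mix dom.
(* Convexity of F along u puts every left difference quotient below every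
   right one; any slope in between will do. *)
pose left_quot x r := (l x - c - F (fun i => B x i - r * u i)) / r.
pose right_quot x t := (c + F (fun i => B x i + t * u i) - l x) / t.
have quot_le x' r x t : 0 < t -> 0 < r -> left_quot x' r <= right_quot x t.
  move=> t0 r0; have tr0 : 0 < t + r by rewrite addr_gt0.
  set lam := t / (t + r).
  have lam01 : 0 <= lam <= 1.
    by rewrite /lam (divr_ge0 (ltW t0) (ltW tr0)) /= ler_pdivrMr // mul1r lerDl ltW.
  have [z [lz Bz]] := mix x' x lam lam01.
  apply: difference_quotients_le => //; rewrite -/lam.
  have := dom z; rewrite lz.
  have -> : B z = (fun i => lam * (B x' i - r * u i) + (1 - lam) * (B x i + t * u i)).
    by rewrite Bz; apply: funext => i; rewrite /lam; field; rewrite gt_eqF.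
  move: (F_convex (fun i => B x' i - r * u i) (fun i => B x i + t * u i) lam01).
  lra.
pose Lo := [set left_quot x r | x in setT & r in [set r | 0 < r]].
have Lo_ub x t : 0 < t -> ubound Lo (right_quot x t).
  by move=> t0 _ [x' _ [r r0 <-]]; exact: quot_le.
have Lo_ne : Lo !=set0 by exists (left_quot x0 1), x0 => //=; exists 1.
have Lo_bounded : has_ubound Lo by exists (right_quot x0 1); exact: Lo_ub.
exists (sup Lo) => x t.
have [t0|t0|->] := ltgtP t 0.
- have : left_quot x (- t) <= sup Lo.
    by apply: ub_le_sup => //; exists x => //=; exists (- t); rewrite ?oppr_gt0.
  rewrite /left_quot ler_pdivrMr ?oppr_gt0 //.
  under eq_fun do rewrite mulNr opprK.
  lra.
- have : sup Lo <= right_quot x t by exact: ge_sup (Lo_ub _ _ t0).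
  rewrite /right_quot ler_pdivlMr //; lra.
- rewrite mul0r addr0; under eq_fun do rewrite mul0r addr0; exact: dom.
Qed.

Variables (d : nat) (y : I -> 'I_d -> R) (mu : 'I_d -> R).

Section Extension.
Variable c : R.
Hypothesis dominated : forall th, dotp th mu - F (fun i => dotp th (y i)) <= c.

Lemma dominated_extension_seq (s : seq I) : uniq s -> exists a : I -> R,
  forall th (t : I -> R), dotp th mu + \sum_(j <- s) t j * a j
    - F (fun i => dotp th (y i) + (if i \in s then t i else 0)) <= c.
Proof.
elim: s => [_|j s IHs] /=.
  exists (fun=> 0) => th t; rewrite big_nil addr0.
  by under eq_fun do rewrite addr0.
case/andP=> js /IHs[a Ha].
pose l (x : ('I_d -> R) * (I -> R)) := dotp x.1 mu + \sum_(i <- s) x.2 i * a i.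
pose B (x : ('I_d -> R) * (I -> R)) i := dotp x.1 (y i) + (if i \in s then x.2 i else 0).
have mix x x' lam : 0 <= lam <= 1 -> exists z,
    l z = lam * l x + (1 - lam) * l x' /\
    B z = (fun i => lam * B x i + (1 - lam) * B x' i).
  move=> _; exists ((fun k => lam * x.1 k + (1 - lam) * x'.1 k),
                   (fun i => lam * x.2 i + (1 - lam) * x'.2 i)); split.
    rewrite /l /= dotp_comb.
    have -> : \sum_(i <- s) (lam * x.2 i + (1 - lam) * x'.2 i) * a i =
        lam * \sum_(i <- s) x.2 i * a i + (1 - lam) * \sum_(i <- s) x'.2 i * a i.
      by rewrite !mulr_sumr -big_split /=; apply: eq_bigr => i _; ring.
    ring.
  by apply: funext => i; rewrite /B /= dotp_comb; case: (i \in s); ring.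
have [b Hb] := dominated_extension_step (fun i => (i == j)%:R) (fun=> 0, fun=> 0)
  mix (fun x => Ha x.1 x.2).
exists (fun i => if i == j then b else a i) => th t.
have B_cons : (fun i => dotp th (y i) + (if i \in j :: s then t i else 0)) =
              (fun i => B (th, t) i + t j * (i == j)%:R).
  apply: funext => i; rewrite /B in_cons /=.
  by case: eqVneq => [->|_]; rewrite ?(negbTE js) ?mulr1 ?mulr0 ?addr0.
rewrite big_cons eqxx (eq_big_seq (fun i => t i * a i)); last first.
  by move=> i si; have /negbTE -> : i != j by apply: contraNneq js => <-.
by have := Hb (th, t) (t j); rewrite /l /= -B_cons; lra.
Qed.

Lemma dominated_extension : exists q : I -> R,
  (forall k, \sum_i q i * y i k = mu k) /\ (forall s, \sum_i s i * q i - F s <= c).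
Proof.
have [a Ha] := dominated_extension_seq (enum_uniq I).
have {}Ha th (t : I -> R) :
    dotp th mu + \sum_i t i * a i - F (fun i => dotp th (y i) + t i) <= c.
  by have := Ha th t; rewrite big_enum; under [X in F X]eq_fun do rewrite mem_enum.
exists a; split=> [k|s]; last first.
  have := Ha (fun=> 0) s; rewrite dotp0 add0r.
  by under [X in F X]eq_fun do rewrite dotp0 add0r.
apply/eqP; rewrite eq_sym -subr_eq0; apply/eqP.
apply: (@linear_bounded_eq0 _ _ (c + F (fun=> 0))) => lam.
(* Moving theta along e_k and t by - lam * y_. k keeps the argument of F at 0. *)
have := Ha (fun m => lam * (m == k)%:R) (fun i => - (lam * y i k)).
rewrite dotp_delta; under [X in F X]eq_fun do rewrite dotp_delta addrN.
have -> : \sum_i - (lam * y i k) * a i = - (lam * \sum_i a i * y i k).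
  by rewrite mulr_sumr -sumrN; apply: eq_bigr => i _; ring.
rewrite mulrBr; lra.
Qed.

End Extension.

Lemma dotp_transpose {q : I -> R} (th : 'I_d -> R) :
  (forall k, \sum_i q i * y i k = mu k) ->
  dotp th mu = \sum_i dotp th (y i) * q i.
Proof.
move=> Yq; rewrite /dotp; under [RHS]eq_bigr do rewrite mulr_suml.
rewrite exchange_big /=; apply: eq_bigr => k _; rewrite -Yq mulr_sumr.
by apply: eq_bigr => i _; ring.
Qed.

Theorem fenchel_comp_transpose :
  fenchel (fun th => (F (fun i => dotp th (y i)))%:E) mu =
  ereal_inf [set fenchel (fun s => (F s)%:E) q |
             q in [set q | forall k, \sum_i q i * y i k = mu k]].
Proof.
apply/eqP; rewrite eq_le; apply/andP; split.
  apply: le_ereal_inf_tmp => _ [q Yq <-]; apply: ge_ereal_sup => _ [th _ <-].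
  apply: ereal_sup_ubound; exists (fun i => dotp th (y i)) => //.
  by rewrite -(dotp_transpose th Yq).
have : ((- F (fun i => dotp (fun=> 0) (y i)))%:E <=
        fenchel (fun th => (F (fun i => dotp th (y i)))%:E) mu)%E.
  apply: ereal_sup_ubound; exists (fun=> 0) => //.
  by rewrite big1 ?add0e // => k _; exact: mul0r.
case Ec : fenchel => [c| |] // _; last by rewrite leey.
have dominated th : dotp th mu - F (fun i => dotp th (y i)) <= c.
  by rewrite -lee_fin EFinB -Ec; apply: ereal_sup_ubound; exists th.
have [q [Yq Fq]] := dominated_extension dominated.
apply: le_trans (ereal_inf_lbound _) _; first by exists q.
by apply: ge_ereal_sup => _ [s _ <-]; rewrite -EFinB lee_fin.
Qed.

End ConvexDomination.

Section IntegrableBigmax.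
Variables (R : realType) (dT : measure_display) (T : measurableType dT)
  (m : {measure set T -> \bar R}).

Lemma integrable_bigmaxe (I : finType) (f : I -> T -> \bar R) : (0 < #|I|)%N ->
  (forall i, m.-integrable [set: T] (f i)) ->
  m.-integrable [set: T] (fun w => \big[Order.max/-oo%E]_i f i w).
Proof.
move=> /card_gt0P[i0 _] f_int.
have max_meas : measurable_fun [set: T] (fun w => \big[Order.max/-oo%E]_i f i w).
  elim: (index_enum I) => [|i r IHr].
    by under eq_fun do rewrite big_nil; exact: measurable_cst.
  under eq_fun do rewrite big_cons.
  exact: measurable_maxe (measurable_int _ (f_int i)) IHr.
apply: (le_integrable measurableT max_meas (g := fun w => \sum_i `|f i w|)%E).
  2: by apply: (integrable_sum measurableT) => i _; exact: integrable_abse.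
move=> w _.
have [i _ ->] := @Order.TotalTheory.eq_bigmax _ _ I -oo%E i0 xpredT (fun i => f i w)
  isT (fun i _ => leNye _).
have abs_ge0 j : (0 <= `|f j w|)%E by exact: abse_ge0.
by rewrite [X in (_ <= X)%E]gee0_abs ?sume_ge0 // (bigD1 i) //= leeDl // sume_ge0.
Qed.

Lemma integrable_dotp (d : nat) (Z : 'I_d -> T -> R) (v : 'I_d -> R) :
  (forall k, m.-integrable [set: T] (fun w => (Z k w)%:E)) ->
  m.-integrable [set: T] (fun w => (dotp (fun k => Z k w) v)%:E).
Proof.
move=> Z_int.
have sum_int : m.-integrable [set: T] (fun w => \sum_(k < d) ((v k)%:E * (Z k w)%:E)%E).
  apply: (integrable_sum measurableT) => k _.
  exact: (integrableZl measurableT (v k) (Z_int k)).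
apply: eq_integrable sum_int => // w _.
by rewrite sumEFin; congr _%:E; apply: eq_bigr => k _; rewrite mulrC.
Qed.

End IntegrableBigmax.

Section ExpectedMax.
Variables (R : realType) (dT : measure_display) (T : measurableType dT)
  (P : probability T R) (I : finType) (g : I -> T -> R).
Hypothesis I_nonempty : (0 < #|I|)%N.
Hypothesis g_int : forall i, P.-integrable [set: T] (fun w => (g i w)%:E).

Definition expected_max (s : I -> R) : \bar R :=
  (\int[P]_w \big[Order.max/-oo]_i (s i + g i w)%:E)%E.

Let max_int (s : I -> R) :
  P.-integrable [set: T] (fun w => \big[Order.max/-oo%E]_i (s i + g i w)%:E).
Proof.
apply: integrable_bigmaxe => // i.
have := integrableD measurableT
  (finite_measure_integrable_cst P (s i) measurableT) (g_int i).
by apply: eq_integrable.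
Qed.

Lemma expected_max_fin_num s : expected_max s \is a fin_num.
Proof. exact: (integrable_fin_num measurableT (max_int s)). Qed.

Lemma expected_max_convex (s t : I -> R) (lam : R) : 0 <= lam <= 1 ->
  (expected_max (fun i => (lam * s i + (1 - lam) * t i)%R) <=
   lam%:E * expected_max s + (1 - lam)%:E * expected_max t)%E.
Proof.
case/andP=> lam_ge0 lam_le1.
have int_s := integrableZl measurableT lam (max_int s).
have int_t := integrableZl measurableT (1 - lam) (max_int t).
rewrite /expected_max -(integralZl measurableT (max_int s)).
rewrite -(integralZl measurableT (max_int t)) -(integralD measurableT int_s int_t).
apply: (le_integral measurableT (max_int _) (integrableD measurableT int_s int_t)).
move=> w _ /=.
apply: bigmax_le => [|i _]; first exact: leNye.
have -> : ((lam * s i + (1 - lam) * t i + g i w)%:E =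
    lam%:E * (s i + g i w)%:E + (1 - lam)%:E * (t i + g i w)%:E)%E.
  by rewrite -!EFinM -EFinD; congr _%:E; ring.
by apply: leeD; apply: lee_wpmul2l; rewrite ?lee_fin ?subr_ge0 //; exact: le_bigmax.
Qed.

End ExpectedMax.

Theorem proposition8 (R : realType) (d : nat) (I : finType)
  (y : I -> 'I_d -> R)
  (HI : (0 < #|I|)%N) (Hinj : injective y) (Hext : no_convex_comb y)
  (eps : R) (Heps : 0 < eps)
  (dT : measure_display) (T : measurableType dT) (P : probability T R)
  (Z : 'I_d -> T -> R)
  (HZm : forall k, measurable_fun [set: T] (Z k))
  (HZint : forall k, P.-integrable [set: T] (fun w => (Z k w)%:E))
  (HZcent : forall k, (\int[P]_w (Z k w)%:E)%E = 0%E)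
  (p : ('I_d -> R) -> R) (Hp : expfam_pos_density p) (HZp : has_density P Z p)
  (mu : 'I_d -> R) :
  fenchel (F_C P Z y eps) mu =
  ereal_inf [set fenchel (F_D P Z y eps) q |
              q in [set q : I -> R | forall k, \sum_(i : I) q i * y i k = mu k]].
Proof.
pose g i w := eps * dotp (fun k => Z k w) (y i).
have g_int i : P.-integrable [set: T] (fun w => (g i w)%:E).
  have := integrableZl measurableT eps (integrable_dotp (y i) HZint).
  by apply: eq_integrable => // w _; rewrite EFinM.
pose F s := fine (expected_max P g s).
have F_D_E : F_D P Z y eps = fun s => (F s)%:E.
  by apply: funext => s; rewrite fineK // expected_max_fin_num.
have F_C_E : F_C P Z y eps = fun th => F_D P Z y eps (fun i => dotp th (y i)).
  apply: funext => th; apply: eq_integral => w _.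
  by apply: eq_bigr => i _; rewrite dotp_shift.
rewrite F_C_E F_D_E; apply: fenchel_comp_transpose => s t lam lam01.
rewrite /F -lee_fin EFinD !EFinM !fineK ?expected_max_fin_num //.
exact: expected_max_convex.
Qed.
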